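(* In the semi-discrete heat setting described in the context, the map $\Lambda_h:\mathcal{W}_h\to\mathcal{F}(\mathring\Omega_h)$, $\varphi\mapsto u_\varphi(T)$, is Fréchet-differentiable at $0$.
   Context: Let $h>0$, integers $M,N\ge2$, grid $\Omega_h=\{(ih,jh):0\le i\le M,0\le j\le N\}$ with nodes indexed $(i,j)$, interior $\mathring\Omega_h=\{1\le i\le M-1,1\le j\le N-1\}$, $\Gamma^1=\{(1,j):1\le j\le N-1\}$; $\mathcal{F}(\mathring\Omega_h)$ is the space of real functions on $\mathring\Omega_h$, extended by $0$ on boundary nodes. $\mathcal{W}_h$ is the set of perturbations $\varphi(t)=\sum_{j=1}^{N-1}h\lambda_j(t)V_j$ ($V_j$ the unit horizontal vector at boundary node $(0,j)$, zero elsewhere) with $\lambda_j\in L^\infty(\mathbb{R}^+)\cap C(\mathbb{R}^+)$, $\sup_j\|\lambda_j\|_\infty<1/2$. $A(\varphi)$ is the 5-point operator $[A(\varphi)\phi]_{(i,j)}=h^{-2}(4\phi_{(i,j)}-\phi_{(i+1,j)}-\phi_{(i-1,j)}-\phi_{(i,j+1)}-\phi_{(i,j-1)})$ off $\Gamma^1$, and $[A(\varphi)\phi]_{(1,j)}=h^{-2}\big(2(1+\frac{1}{1+\lambda_j(t)})\phi_{(1,j)}-\frac{2}{2+\lambda_j(t)}\phi_{(2,j)}-\phi_{(1,j+1)}-\phi_{(1,j-1)}\big)$. Given a source $F:[0,\infty)\to\mathcal{F}(\mathring\Omega_h)$ and $u_0\in\mathcal{F}(\mathring\Omega_h)$, $u_\varphi$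 solves $\partial_tu_\varphi+A(\varphi)u_\varphi=F$, $u_\varphi(0)=u_0$, and $T>0$ is fixed. *)

From HB Require Import structures.
From mathcomp Require Import all_boot all_order all_algebra.
From mathcomp Require Import all_classical all_reals all_analysis.
Set Implicit Arguments. Unset Strict Implicit. Unset Printing Implicit Defensive.
Import Order.TTheory GRing.Theory Num.Theory.
Import numFieldNormedType.Exports.
Local Open Scope classical_set_scope.
Local Open Scope ring_scope.

Definition cont_on_Rplus {R : realType} (f : R -> R) : Prop :=
  {within `[0 : R, +oo[%classic, continuous f}.

(* Grid functions are represented as  nat -> nat -> R  (node (i,j));
   only interior nodes 1 <= i <= M-1, 1 <= j <= N-1 are meaningful. *)
Definition inner_node (M N i j : nat) : bool := (0 < i < M)%N && (0 < j < N)%N.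

(* Extension by 0 on boundary nodes: the element of F(interior Omega_h). *)
Definition ext {R : realType} (M N : nat) (v : nat -> nat -> R) (i j : nat) : R :=
  if inner_node M N i j then v i j else 0.

(* A perturbation phi = sum_j h lambda_j V_j is encoded by its coefficients
   lam : nat -> R -> R, lam j = lambda_j for 1 <= j <= N-1 (other indices
   are irrelevant). *)

Definition Aop {R : realType} (h : R) (M N : nat) (lam : nat -> R -> R) (t : R)
  (v : nat -> nat -> R) (i j : nat) : R :=
  let w := ext M N v in
  if i == 1%N then
    h ^- 2 * (2 * (1 + (1 + lam j t)^-1) * w 1%N j
              - 2 / (2 + lam j t) * w 2%N j - w 1%N j.+1 - w 1%N j.-1)
  else
    h ^- 2 * (4 * w i j - w i.+1 j - w i.-1 j - w i j.+1 - w i j.-1).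

Definition admissible {R : realType} (N : nat) (lam : nat -> R -> R) : Prop :=
  forall j, (0 < j < N)%N ->
    cont_on_Rplus (lam j) /\
    exists B : R, forall t, 0 <= t -> `|lam j t| <= B.

Definition lamnorm {R : realType} (N : nat) (lam : nat -> R -> R) : R :=
  sup [set r : R | exists j t, (0 < j < N)%N /\ 0 <= t /\ r = `|lam j t|].

Definition inWh {R : realType} (N : nat) (lam : nat -> R -> R) : Prop :=
  admissible N lam /\ lamnorm N lam < 2^-1.

Definition is_solution {R : realType} (h : R) (M N : nat)
  (F : R -> nat -> nat -> R) (u0 : nat -> nat -> R) (lam : nat -> R -> R)
  (u : R -> nat -> nat -> R) : Prop :=
  forall i j, inner_node M N i j ->
    u 0 i j = u0 i j /\
    cont_on_Rplus (fun s => u s i j) /\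
    forall t : R, 0 < t ->
      is_derive t (1 : R) (fun s : R => u s i j) (F t i j - Aop h M N lam t (u t) i j).

(* Frechet differentiability at phi = 0 of a map Lam : W_h -> F(interior),
   with the norm lamnorm on the perturbation space and the max-norm over
   interior nodes on F(interior Omega_h) (written componentwise). *)
Definition frechet_diff_at0 {R : realType} (M N : nat)
  (Lam : (nat -> R -> R) -> nat -> nat -> R) : Prop :=
  exists L : (nat -> R -> R) -> nat -> nat -> R,
    (forall (a b : R) x y, admissible N x -> admissible N y ->
       forall i j, inner_node M N i j ->
         L (fun k t => a * x k t + b * y k t) i j = a * L x i j + b * L y i j) /\
    (exists C : R, forall x, admissible N x ->
       forall i j, inner_node M N i j -> `|L x i j| <= C * lamnorm N x) /\
    (forall eps : R, 0 < eps -> exists delta : R, 0 < delta /\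
       forall x, inWh N x -> lamnorm N x < delta ->
         forall i j, inner_node M N i j ->
           `|Lam x i j - Lam (fun _ _ => 0) i j - L x i j| <= eps * lamnorm N x).

From HB Require Import structures.
From mathcomp Require Import all_boot all_order all_algebra.
From mathcomp Require Import all_classical all_reals all_analysis.
From mathcomp Require Import zify ring lra.
Import Order.TTheory GRing.Theory Num.Theory.
Import numFieldNormedType.Exports.
Local Open Scope classical_set_scope.
Local Open Scope ring_scope.

(* Write g(lam) = u_lam(T) - u_0(T), one grid node at a time.  Energy estimates
   (Gronwall) for the semi-discrete equation bound every u_lam on [0, T]; since
   u_lam - u_0 solves the unperturbed equation with zero initial value and forcing
   (A(0) - A(lam)) u_lam, which lives on the column i = 1 only, this gives
   |g(lam)| <= L |lam|.  The coefficients of A(lam) - A(0) are, up to O(lam_j^2),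
   linear in lam_j, so along z = a x + b y the first-order parts of the forcing of
   u_z - a u_x - b u_y cancel, and the same estimate yields the quasi-linearity
   |g(z) - a g(x) - b g(y)| <= K (1 + |a| + |b|) (|x|^2 + |y|^2 + |z|^2).
   For such a g the dyadic quotients 2^n g(2^-n x) form a Cauchy sequence; their
   limit is linear, bounded by L |x|, and within 10 K |x|^2 of g(x): it is the
   Frechet derivative at 0, obtained without solving a linearized equation. *)

Lemma normM_le {R : numDomainType} {x y X Y : R} :
  `|x| <= X -> `|y| <= Y -> `|x * y| <= X * Y.
Proof. by move=> hx hy; rewrite normrM; apply: ler_pM. Qed.

Section RealInequalities.
Context {R : realFieldType}.

Lemma norm_sub4_le (a b c d : R) : `|a - b - c - d| <= `|a| + `|b| + `|c| + `|d|.
Proof.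
have := ler_normB (a - b - c) d; have := ler_normB (a - b) c; have := ler_normB a b.
lra.
Qed.

Lemma sqr_le_of_norm {x r : R} : `|x| <= r -> x ^+ 2 <= r ^+ 2.
Proof.
move=> xr; rewrite -real_normK ?num_real // ler_sqr ?nnegrE //.
exact: le_trans (normr_ge0 _) xr.
Qed.

Lemma inv_le2 (c : R) : 2^-1 <= c -> 0 < c^-1 <= 2.
Proof.
move=> c_ge; have c_gt0 : 0 < c by lra.
rewrite invr_gt0 c_gt0 -[c^-1]mul1r ler_pdivrMr //; lra.
Qed.

End RealInequalities.

(** * Dyadic difference quotients *)

Section DyadicSequences.
Variable R : realType.

Lemma cvg_dyadic : (2 ^- n : R) @[n --> \oo] --> 0.
Proof.
under eq_fun do rewrite -exprVn.
by apply: cvg_expr; rewrite ger0_norm ?invr_ge0 ?invf_lt1 ?ltr1n.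
Qed.

Lemma near_dyadic_gt (r : R) : \forall n \near \oo, r < 2 ^+ n.
Proof.
near=> n; apply: lt_le_trans (_ : n%:R <= _).
  by near: n; exact: nbhs_infty_gtr.
by rewrite -natrX ler_nat ltnW // ltn_expl.
Unshelve. all: by end_near. Qed.

Lemma ler0_dyadic (c C : R) : (\forall n \near \oo, c <= C * 2 ^- n) -> c <= 0.
Proof.
move=> cC; have cvgC : C * 2 ^- n @[n --> \oo] --> (0 : R).
  by rewrite -(mulr0 C); apply: cvgMr; exact: cvg_dyadic.
by rewrite -(cvg_lim _ cvgC) //; apply: limr_ge => //; exact: cvgP cvgC.
Qed.

Section Cauchy.
Variables (a : R^nat) (C : R) (n0 : nat).
Hypothesis step_le : forall n, (n0 <= n)%N -> `|a n.+1 - a n| <= C * 2 ^- n.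

Lemma dyadic_tail_le n m : (n0 <= n <= m)%N -> `|a m - a n| <= 2 * C * (2 ^- n - 2 ^- m).
Proof.
case/andP=> n0n; elim: m => [|m IH]; first by rewrite leqn0 => /eqP ->; rewrite !subrr normr0 mulr0.
rewrite leq_eqVlt => /orP[/eqP <-|]; first by rewrite !subrr normr0 mulr0.
rewrite ltnS => nm; have := IH nm; have := @step_le m (leq_trans n0n nm).
have := ler_normD (a m.+1 - a m) (a m - a n); rewrite addrA subrK.
rewrite [2 ^+ m.+1]exprS invfM; lra.
Qed.

Lemma dyadic_cauchy :
  cvgn a /\ forall n, (n0 <= n)%N -> `|limn a - a n| <= 2 * C * 2 ^- n.
Proof.
have C_ge0 : 0 <= C.
  have := le_trans (normr_ge0 _) (@step_le n0 (leqnn n0)).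
  by rewrite pmulr_lge0 // invr_gt0 exprn_gt0.
have tail n m : (n0 <= n <= m)%N -> `|a m - a n| <= 2 * C * 2 ^- n.
  move=> nm; apply: le_trans (dyadic_tail_le _ _ nm) _; apply: ler_wpM2l; first lra.
  by rewrite lerBlDr lerDl invr_ge0 exprn_ge0.
have cvg_a : cvgn a.
  apply/cauchy_cvgP/cauchy_exP => e e0.
  have [n n0n small] : exists2 n, (n0 <= n)%N & 2 * C * 2 ^- n < e.
    have [k _ big] := near_dyadic_gt (2 * C / e).
    exists (maxn n0 k); first exact: leq_maxl.
    have := big _ (leq_maxr n0 k); rewrite ltr_pdivrMr // => lt_k.
    by rewrite ltr_pdivrMr ?exprn_gt0 // [e * _]mulrC.
  exists (a n); exists n => // m /= nm; rewrite /ball /= distrC.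
  by apply: le_lt_trans small; apply: tail; rewrite n0n.
split => // n n0n.
have near_tail : \forall m \near \oo, `|a m - a n| <= 2 * C * 2 ^- n.
  by near=> m; apply: tail; rewrite n0n /=; near: m; exact: nbhs_infty_ge.
have lo : a n - 2 * C * 2 ^- n <= limn a.
  by apply: limr_ge => //; apply: filterS near_tail => m /ler_normlP[]; lra.
have hi : limn a <= a n + 2 * C * 2 ^- n.
  by apply: limr_le => //; apply: filterS near_tail => m /ler_normlP[]; lra.
by rewrite ler_norml; apply/andP; split; lra.
Unshelve. all: by end_near. Qed.

End Cauchy.
End DyadicSequences.

Arguments dyadic_cauchy {R a C n0}.

Section DyadicDerivative.
Variables (R : realType) (V : lmodType R) (D : V -> Prop) (nrm : V -> R) (g : V -> R).
Variables (K Lg : R).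
Hypotheses (D_comb : forall a b x y, D x -> D y -> D (a *: x + b *: y))
  (nrm_ge0 : forall x, D x -> 0 <= nrm x)
  (nrmZ : forall c x, D x -> nrm (c *: x) <= `|c| * nrm x)
  (K_ge0 : 0 <= K) (Lg_ge0 : 0 <= Lg)
  (g_lipschitz : forall x, D x -> nrm x < 2^-1 -> `|g x| <= Lg * nrm x)
  (g_quasilinear : forall a b x y, D x -> D y ->
    nrm x < 2^-1 -> nrm y < 2^-1 -> nrm (a *: x + b *: y) < 2^-1 ->
    `|g (a *: x + b *: y) - a * g x - b * g y|
      <= K * (1 + `|a| + `|b|) * (nrm x ^+ 2 + nrm y ^+ 2 + nrm (a *: x + b *: y) ^+ 2)).

Definition dyadic_quotient n x := 2 ^+ n * g (2 ^- n *: x).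
Definition dyadic_derivative x := limn (dyadic_quotient ^~ x).

Lemma D_scale c x : D x -> D (c *: x).
Proof. by move=> Dx; have := @D_comb c 0 x x Dx Dx; rewrite scale0r addr0. Qed.

Lemma nrm_dyadic_le n x : D x -> nrm (2 ^- n *: x) <= 2 ^- n * nrm x.
Proof. by move=> Dx; apply: le_trans (nrmZ _ _ Dx) _; rewrite ger0_norm // invr_ge0 exprn_ge0. Qed.

Lemma nrm_dyadic_lt n x : D x -> 2 * nrm x < 2 ^+ n -> nrm (2 ^- n *: x) < 2^-1.
Proof.
move=> Dx lt_n; apply: le_lt_trans (nrm_dyadic_le n _ Dx) _.
rewrite mulrC ltr_pdivrMr ?exprn_gt0 //; lra.
Qed.

Lemma sqr_nrm_dyadic_le n x : D x -> nrm (2 ^- n *: x) ^+ 2 <= (2 ^- n * nrm x) ^+ 2.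
Proof.
move=> Dx; rewrite ler_sqr ?nnegrE ?mulr_ge0 ?invr_ge0 ?exprn_ge0 ?nrm_ge0 //;
  [exact: nrm_dyadic_le | exact: D_scale].
Qed.

Lemma dyadic_quotient_step n x : D x -> 2 * nrm x < 2 ^+ n ->
  `|dyadic_quotient n.+1 x - dyadic_quotient n x| <= 5 * K * nrm x ^+ 2 * 2 ^- n.
Proof.
move=> Dx lt_n; set p := nrm x; set w := 2 ^- n.
have lt_Sn : 2 * p < 2 ^+ n.+1.
  by apply: lt_le_trans lt_n _; rewrite (ler_weXn2l (_ : 1 <= 2)) ?ler1n.
have w_gt0 : 0 < w by rewrite invr_gt0 exprn_gt0.
have Pw : 2 ^+ n * w = 1 by rewrite mulfV // expf_neq0.
set y := 2 ^- n.+1 *: x.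
have yy : 1 *: y + 1 *: y = 2 ^- n *: x.
  by rewrite !scale1r /y -scalerDl exprS invfM; congr (_ *: _); lra.
have Dy : D y by exact: D_scale.
have := g_quasilinear 1 1 _ _ Dy Dy (nrm_dyadic_lt _ _ Dx lt_Sn) (nrm_dyadic_lt _ _ Dx lt_Sn).
rewrite yy => /(_ (nrm_dyadic_lt _ _ Dx lt_n)); rewrite !mul1r normr1.
have ny : nrm y ^+ 2 <= (w * p) ^+ 2 / 4.
  have -> : (w * p) ^+ 2 / 4 = (2 ^- n.+1 * p) ^+ 2.
    by rewrite [2 ^+ n.+1]exprS invfM -/w; field.
  exact: sqr_nrm_dyadic_le.
have nxn : nrm (2 ^- n *: x) ^+ 2 <= (w * p) ^+ 2 by exact: sqr_nrm_dyadic_le.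
move=> quasi.
have bound : `|g (2 ^- n *: x) - g y - g y| <= 9 / 2 * K * (w * p) ^+ 2.
  apply: le_trans quasi _; rewrite -mulrA [9 / 2 * K]mulrC -mulrA ler_wpM2l //; lra.
have -> : dyadic_quotient n.+1 x - dyadic_quotient n x
        = - (2 ^+ n * (g (2 ^- n *: x) - g y - g y)).
  by rewrite /dyadic_quotient -/y [2 ^+ n.+1]exprS; ring.
rewrite normrN normrM ger0_norm ?exprn_ge0 //.
apply: le_trans (ler_wpM2l (exprn_ge0 _ (ler0n _ 2)) bound) _.
have -> : 2 ^+ n * (9 / 2 * K * (w * p) ^+ 2) = 9 / 2 * K * p ^+ 2 * w * (2 ^+ n * w).
  by ring.
rewrite Pw mulr1; have := mulr_ge0 (mulr_ge0 K_ge0 (sqr_ge0 p)) (ltW w_gt0); lra.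
Qed.

Lemma dyadic_derivative_approx n x : D x -> 2 * nrm x < 2 ^+ n ->
  `|dyadic_derivative x - dyadic_quotient n x| <= 10 * K * nrm x ^+ 2 * 2 ^- n.
Proof.
move=> Dx lt_n.
have step m : (n <= m)%N -> `|dyadic_quotient m.+1 x - dyadic_quotient m x|
    <= 5 * K * nrm x ^+ 2 * 2 ^- m.
  move=> nm; apply: dyadic_quotient_step => //.
  by apply: lt_le_trans lt_n _; rewrite (ler_weXn2l (_ : 1 <= 2)) ?ler1n.
have [_ tail] := dyadic_cauchy step.
by apply: le_trans (tail n (leqnn n)) _; lra.
Qed.

Lemma dyadic_derivative_remainder x : D x -> nrm x < 2^-1 ->
  `|g x - dyadic_derivative x| <= 10 * K * nrm x ^+ 2.
Proof.
move=> Dx small; have lt0 : 2 * nrm x < 2 ^+ 0 by rewrite expr0; lra.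
have := dyadic_derivative_approx 0 _ Dx lt0.
by rewrite /dyadic_quotient expr0 invr1 mulr1 scale1r mul1r distrC.
Qed.

Lemma dyadic_derivative_bound x : D x -> `|dyadic_derivative x| <= Lg * nrm x.
Proof.
move=> Dx; rewrite -subr_le0; apply: (@ler0_dyadic _ _ (10 * K * nrm x ^+ 2)).
near=> n.
have lt_n : 2 * nrm x < 2 ^+ n by near: n; exact: near_dyadic_gt.
have approx := dyadic_derivative_approx _ _ Dx lt_n.
have quot : `|dyadic_quotient n x| <= Lg * nrm x.
  rewrite /dyadic_quotient normrM ger0_norm ?exprn_ge0 //.
  apply: le_trans (ler_wpM2l (exprn_ge0 _ (ler0n _ 2))
    (g_lipschitz _ (D_scale _ _ Dx) (nrm_dyadic_lt _ _ Dx lt_n))) _.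
  apply: le_trans (ler_wpM2l (exprn_ge0 _ (ler0n _ 2)) (ler_wpM2l Lg_ge0 (nrm_dyadic_le n _ Dx))) _.
  have -> : 2 ^+ n * (Lg * (2 ^- n * nrm x)) = Lg * nrm x * (2 ^+ n * 2 ^- n) by ring.
  by rewrite mulfV ?expf_neq0 // mulr1.
have := ler_normD (dyadic_derivative x - dyadic_quotient n x) (dyadic_quotient n x).
rewrite subrK; lra.
Unshelve. all: by end_near. Qed.

Lemma dyadic_quotient_comb_le n a b x y : D x -> D y ->
  2 * nrm x < 2 ^+ n -> 2 * nrm y < 2 ^+ n -> 2 * nrm (a *: x + b *: y) < 2 ^+ n ->
  `|dyadic_quotient n (a *: x + b *: y) - a * dyadic_quotient n x - b * dyadic_quotient n y|
    <= K * (1 + `|a| + `|b|) * (nrm x ^+ 2 + nrm y ^+ 2 + nrm (a *: x + b *: y) ^+ 2) * 2 ^- n.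
Proof.
move=> Dx Dy lt_x lt_y lt_z; set z := a *: x + b *: y; set w := 2 ^- n.
have Dz : D z by exact: D_comb.
have zn : 2 ^- n *: z = a *: (2 ^- n *: x) + b *: (2 ^- n *: y).
  by rewrite scalerDr !scalerA mulrC [b * _]mulrC.
have := g_quasilinear a b _ _ (D_scale _ _ Dx) (D_scale _ _ Dy)
  (nrm_dyadic_lt _ _ Dx lt_x) (nrm_dyadic_lt _ _ Dy lt_y).
rewrite -zn => /(_ (nrm_dyadic_lt _ _ Dz lt_z)) quasi.
have -> : dyadic_quotient n z - a * dyadic_quotient n x - b * dyadic_quotient n y
    = 2 ^+ n * (g (2 ^- n *: z) - a * g (2 ^- n *: x) - b * g (2 ^- n *: y)).
  by rewrite /dyadic_quotient; ring.
rewrite normrM ger0_norm ?exprn_ge0 //.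
apply: le_trans (ler_wpM2l (exprn_ge0 _ (ler0n _ 2)) quasi) _.
have sq : nrm (2 ^- n *: x) ^+ 2 + nrm (2 ^- n *: y) ^+ 2 + nrm (2 ^- n *: z) ^+ 2
    <= w ^+ 2 * (nrm x ^+ 2 + nrm y ^+ 2 + nrm z ^+ 2).
  have := sqr_nrm_dyadic_le n _ Dx; have := sqr_nrm_dyadic_le n _ Dy.
  have := sqr_nrm_dyadic_le n _ Dz; rewrite -/w !exprMn; lra.
have K3 : 0 <= K * (1 + `|a| + `|b|) by rewrite mulr_ge0 // !addr_ge0.
apply: le_trans (ler_wpM2l (exprn_ge0 _ (ler0n _ 2)) (ler_wpM2l K3 sq)) _.
have -> : 2 ^+ n * (K * (1 + `|a| + `|b|) * (w ^+ 2 * (nrm x ^+ 2 + nrm y ^+ 2 + nrm z ^+ 2)))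
    = K * (1 + `|a| + `|b|) * (nrm x ^+ 2 + nrm y ^+ 2 + nrm z ^+ 2) * w * (2 ^+ n * w) by ring.
by rewrite mulfV ?expf_neq0 // mulr1.
Qed.

Lemma dyadic_derivative_lin a b x y : D x -> D y ->
  dyadic_derivative (a *: x + b *: y) = a * dyadic_derivative x + b * dyadic_derivative y.
Proof.
move=> Dx Dy; set z := a *: x + b *: y; have Dz : D z by exact: D_comb.
set px := nrm x; set py := nrm y; set pz := nrm z.
apply/eqP; rewrite -subr_eq0 -normr_le0.
apply: (@ler0_dyadic _ _ (10 * K * pz ^+ 2 + `|a| * (10 * K * px ^+ 2) + `|b| * (10 * K * py ^+ 2)
  + K * (1 + `|a| + `|b|) * (px ^+ 2 + py ^+ 2 + pz ^+ 2))).
near=> n.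
have lt_x : 2 * px < 2 ^+ n by near: n; exact: near_dyadic_gt.
have lt_y : 2 * py < 2 ^+ n by near: n; exact: near_dyadic_gt.
have lt_z : 2 * pz < 2 ^+ n by near: n; exact: near_dyadic_gt.
have ez := dyadic_derivative_approx _ _ Dz lt_z.
have ax := normM_le (lexx `|a|) (dyadic_derivative_approx _ _ Dx lt_x).
have bx := normM_le (lexx `|b|) (dyadic_derivative_approx _ _ Dy lt_y).
have comb := dyadic_quotient_comb_le n a b _ _ Dx Dy lt_x lt_y lt_z.
rewrite -/z -/px -/py -/pz in ez ax bx comb.
set dz := dyadic_derivative z - dyadic_quotient n z in ez.
set dx := a * _ in ax; set dy := b * _ in bx; set q := _ - _ - _ in comb.
have -> : dyadic_derivative z - (a * dyadic_derivative x + b * dyadic_derivative y)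
    = dz - dx - dy + q by rewrite /dz /dx /dy /q; ring.
have t1 := ler_normD (dz - dx - dy) q; have t2 := ler_normB (dz - dx) dy.
have t3 := ler_normB dz dx; lra.
Unshelve. all: by end_near. Qed.

Theorem dyadic_differentiable :
  [/\ forall a b x y, D x -> D y ->
        dyadic_derivative (a *: x + b *: y) = a * dyadic_derivative x + b * dyadic_derivative y,
      forall x, D x -> `|dyadic_derivative x| <= Lg * nrm x
    & forall x, D x -> nrm x < 2^-1 -> `|g x - dyadic_derivative x| <= 10 * K * nrm x ^+ 2].
Proof.
split; [exact: dyadic_derivative_lin | exact: dyadic_derivative_bound |].
exact: dyadic_derivative_remainder.
Qed.

End DyadicDerivative.

Arguments dyadic_quotient {R V}.
Arguments dyadic_derivative {R V}.
Arguments dyadic_differentiable {R V}.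

(** * Energy estimates *)

Section Calculus.
Variable R : realType.

Lemma is_derive_bigsum n (f : 'I_n -> R -> R) (df : 'I_n -> R) (t : R) :
  (forall i, is_derive t 1 (f i) (df i)) ->
  is_derive t 1 (fun s => \sum_(i < n) f i s) (\sum_(i < n) df i).
Proof. by move=> H; rewrite -fct_sumE; exact: is_derive_sum. Qed.

Lemma within_continuous_bigsum n (A : set R) (f : 'I_n -> R -> R) :
  (forall i, {within A, continuous (f i)}) ->
  {within A, continuous (fun s => \sum_(i < n) f i s)}.
Proof.
move=> H; rewrite -fct_sumE; elim/big_ind: _ => //; first by move=> x; exact: cvg_cst.
by move=> f1 f2; exact: within_continuousD.
Qed.

Lemma is_derive_expRM (k t : R) :
  is_derive t 1 (fun s => expR (k * s)) (k * expR (k * t)).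
Proof.
have := is_deriveZ k (is_derive_id t (1 : R)); rewrite /GRing.scale /= mulr1 => dk.
by have := is_derive1_comp (is_derive_expR (k * t)) dk; rewrite mulrC.
Qed.

Lemma gronwall (f df : R -> R) (k b T' : R) : 0 < k -> 0 <= b -> 0 <= T' ->
  {within `[0, T'], continuous f} ->
  (forall t, 0 < t < T' -> is_derive t 1 f (df t)) ->
  (forall t, 0 < t < T' -> df t <= k * f t + b) ->
  f T' <= (f 0 + b / k) * expR (k * T').
Proof.
move=> k0 b0 T0 cf fd fle.
(* The integrating factor makes [(f + b / k) e^(- k t)] nonincreasing. *)
pose g := (f + cst (b / k)) * (fun s => expR (- k * s)).
have gd t : 0 < t < T' -> is_derive t 1 g
    ((f t + b / k) *: (- k * expR (- k * t)) + expR (- k * t) *: (df t + 0)).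
  move=> tT; apply: is_deriveM; last exact: is_derive_expRM.
  exact: is_deriveD (fd t tT) (is_derive_cst (b / k) t 1).
have gc : {within `[0, T'], continuous g}.
  move=> x; apply: cvgM; first by apply: cvgD; [exact: cf | exact: cvg_cst].
  apply: continuous_subspaceT => y.
  apply: differentiable_continuous; apply/derivable1_diffP.
  by have [] := is_derive_expRM (- k) y.
have : g T' <= g 0.
  apply: (@ler0_derive1_le_cc _ g 0 T') => //; last 2 first.
  - by rewrite in_itv /= lexx T0.
  - by rewrite in_itv /= lexx T0.
  - by move=> t; rewrite in_itv /= => /gd [].
  - move=> t; rewrite in_itv /= => tT; have dg := gd t tT; rewrite derive1E derive_val.
    rewrite /GRing.scale /=; have := expR_gt0 (- k * t); have := fle t tT.
    have -> : (f t + b / k) * (- k * expR (- k * t)) = - (k * f t + b) * expR (- k * t).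
      by field; rewrite gt_eqF.
    nra.
change ((f T' + b / k) * expR (- k * T') <= (f 0 + b / k) * expR (- k * 0) ->
  f T' <= (f 0 + b / k) * expR (k * T')).
rewrite mulr0 expR0 mulr1 mulNr expRN => gle.
have eT := expR_gt0 (k * T').
have : f T' + b / k <= (f 0 + b / k) * expR (k * T') by rewrite -ler_pdivrMr.
have : 0 <= b / k by rewrite divr_ge0 // ltW.
lra.
Qed.

End Calculus.

Section GridEnergy.
Context {R : realType}.
Variables (M N : nat).
Local Notation grid := (nat -> nat -> R).

Definition energy (v : grid) : R := \sum_(i < M.+1) \sum_(j < N.+1) ext M N v i j ^+ 2.
Definition grid_card : R := (M.+1 * N.+1)%:R.

Lemma grid_card_ge0 : 0 <= grid_card. Proof. exact: ler0n. Qed.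

Lemma energy_ge0 v : 0 <= energy v.
Proof. by apply: sumr_ge0 => i _; apply: sumr_ge0 => j _; exact: sqr_ge0. Qed.

Lemma sqr_ext_le_energy v a b : ext M N v a b ^+ 2 <= energy v.
Proof.
have [inn|out] := boolP (inner_node M N a b); last first.
  by rewrite /ext (negbTE out) expr0n energy_ge0.
move: (inn); rewrite /inner_node => /andP[/andP[_ aM] /andP[_ bN]].
have aM' : (a < M.+1)%N by lia.
have bN' : (b < N.+1)%N by lia.
rewrite /energy (bigD1 (Ordinal aM')) //= (bigD1 (Ordinal bN')) //= -addrA lerDl.
by rewrite addr_ge0 ?sumr_ge0 // => i _; rewrite ?sumr_ge0 ?sqr_ge0 // => j _; exact: sqr_ge0.
Qed.

Lemma norm_ext_le_sqrt_energy v a b : `|ext M N v a b| <= Num.sqrt (energy v).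
Proof. by rewrite -sqrtr_sqr ler_wsqrtr // sqr_ext_le_energy. Qed.

Lemma eq_energy v w : (forall a b, inner_node M N a b -> v a b = w a b) -> energy v = energy w.
Proof.
move=> vw; apply: eq_bigr => i _; apply: eq_bigr => j _.
by rewrite /ext; case: ifP => // inn; rewrite vw.
Qed.

Lemma energy0 : energy (fun _ _ => 0) = 0.
Proof. by apply: big1 => i _; apply: big1 => j _; rewrite /ext; case: ifP; rewrite expr0n. Qed.

Lemma is_derive_energy (z : R -> grid) (dz : grid) (t : R) :
  (forall i j, inner_node M N i j -> is_derive t 1 (fun s => z s i j) (dz i j)) ->
  is_derive t 1 (fun s => energy (z s))
    (\sum_(i < M.+1) \sum_(j < N.+1) 2 * ext M N (z t) i j * ext M N dz i j).
Proof.
move=> dzP; apply: is_derive_bigsum => i; apply: is_derive_bigsum => j.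
rewrite /ext; case: ifPn => [inn|_]; last first.
  by rewrite expr0n !mulr0; exact: is_derive_cst.
have -> : (fun s => z s i j ^+ 2) = (fun s => z s i j) * (fun s => z s i j).
  by apply/funext => s; rewrite expr2.
apply: is_derive_eq; first exact: is_deriveM (dzP _ _ inn) (dzP _ _ inn).
by rewrite /GRing.scale /=; ring.
Qed.

Lemma continuous_energy (z : R -> grid) :
  (forall i j, inner_node M N i j -> cont_on_Rplus (fun s => z s i j)) ->
  cont_on_Rplus (fun s => energy (z s)).
Proof.
move=> zc; apply: within_continuous_bigsum => i; apply: within_continuous_bigsum => j.
rewrite /ext; have [inn|_] := boolP (inner_node M N i j); last by move=> x; exact: cvg_cst.
have -> : (fun s => z s i j ^+ 2) = (fun s => z s i j * z s i j).
  by apply/funext => s; rewrite expr2.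
by move=> x; apply: cvgM; exact: zc.
Qed.

End GridEnergy.

Section Evolution.
Context {R : realType}.
Variables (h : R) (M N : nat).
Hypothesis h_gt0 : 0 < h.
Local Notation grid := (nat -> nat -> R).
Local Notation energy := (@energy R M N).
Local Notation grid_card := (@grid_card R M N).
Local Notation energy_ge0 := (@energy_ge0 R M N).
Local Notation sqr_ext_le_energy := (@sqr_ext_le_energy R M N).
Local Notation eq_energy := (@eq_energy R M N).
Local Notation energy0 := (@energy0 R M N).
Local Notation grid_card_ge0 := (@grid_card_ge0 R M N).

Definition evolves (mu : nat -> R -> R) (f z : R -> grid) : Prop :=
  forall i j, inner_node M N i j ->
    cont_on_Rplus (fun s => z s i j) /\
    forall t : R, 0 < t -> is_derive t 1 (fun s => z s i j) (f t i j - Aop h M N mu t (z t) i j).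

Lemma invh2_gt0 : 0 < h^-2.
Proof. by rewrite invr_gt0 exprn_gt0. Qed.

Lemma Aop_norm_le mu t v i j : `|mu j t| <= 2^-1 ->
  `|Aop h M N mu t v i j| <= 12 * h^-2 * Num.sqrt (energy v).
Proof.
move=> /ler_normlP[mu_lo mu_hi].
have hh := invh2_gt0.
set S := Num.sqrt (energy v).
have vS a b : `|ext M N v a b| <= S by exact: norm_ext_le_sqrt_energy.
have S_ge0 : 0 <= S by exact: sqrtr_ge0.
have -> : 12 * h^-2 * S = h^-2 * (12 * S) by ring.
rewrite /Aop /=; case: ifP => _; rewrite normrM (gtr0_norm hh) ler_pM2l //.
- have /andP[p_gt0 p_le2] : 0 < (1 + mu j t)^-1 <= 2 by apply: inv_le2; lra.
  have /andP[q_gt0 q_le2] : 0 < (2 + mu j t)^-1 <= 2 by apply: inv_le2; lra.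
  have c1 : `|2 * (1 + (1 + mu j t)^-1)| <= 6 by rewrite ger0_norm; lra.
  have c2 : `|2 / (2 + mu j t)| <= 4 by rewrite ger0_norm; lra.
  apply: le_trans (norm_sub4_le _ _ _ _) _.
  have := normM_le c1 (vS 1%N j); have := normM_le c2 (vS 2%N j).
  have := vS 1%N j.+1; have := vS 1%N j.-1; lra.
- have c4 : `|4 : R| <= 4 by rewrite ger0_norm.
  have := ler_normB (4 * ext M N v i j - ext M N v i.+1 j - ext M N v i.-1 j
    - ext M N v i j.+1) (ext M N v i j.-1).
  have := norm_sub4_le (4 * ext M N v i j) (ext M N v i.+1 j) (ext M N v i.-1 j)
    (ext M N v i j.+1).
  have := normM_le c4 (vS i j).
  have := vS i.+1 j; have := vS i.-1 j; have := vS i j.+1; have := vS i j.-1; lra.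
Qed.

Definition growth_rate : R := 1 + 2 * grid_card * (144 * h^-2 ^+ 2).

Lemma growth_rate_ge1 : 1 <= growth_rate.
Proof.
by rewrite lerDl; apply: mulr_ge0; rewrite mulr_ge0 ?grid_card_ge0 ?sqr_ge0.
Qed.

Lemma Aop_sqr_le mu t v i j : `|mu j t| <= 2^-1 ->
  Aop h M N mu t v i j ^+ 2 <= 144 * h^-2 ^+ 2 * energy v.
Proof.
move=> mu_le; have A_le := Aop_norm_le _ _ v i _ mu_le.
have -> : 144 * h^-2 ^+ 2 * energy v = (12 * h^-2 * Num.sqrt (energy v)) ^+ 2.
  by rewrite !exprMn sqr_sqrtr ?energy_ge0 //; ring.
rewrite -real_normK ?num_real // ler_sqr ?nnegrE //.
by rewrite !mulr_ge0 ?sqrtr_ge0 // invr_ge0 exprn_ge0 // ltW.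
Qed.

Lemma energy_estimate {mu f z} G T' :
  (forall j t, (0 < j < N)%N -> 0 <= t -> `|mu j t| <= 2^-1) -> evolves mu f z ->
  0 <= T' -> 0 <= G -> (forall t i j, 0 < t < T' -> inner_node M N i j -> f t i j ^+ 2 <= G) ->
  energy (z T') <= (energy (z 0) + 2 * grid_card * G) * expR (growth_rate * T').
Proof.
move=> mu_le zev T'_ge0 G_ge0 f_le.
have k_ge1 := growth_rate_ge1.
have b_ge0 : 0 <= 2 * grid_card * G by rewrite !mulr_ge0 ?grid_card_ge0.
apply: le_trans (_ : (energy (z 0) + 2 * grid_card * G / growth_rate)
  * expR (growth_rate * T') <= _); last first.
  rewrite ler_wpM2r ?expR_ge0 // lerD2l ler_pdivrMr; last lra.
  by rewrite ler_peMr.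
pose dz t i j := f t i j - Aop h M N mu t (z t) i j.
apply: (@gronwall _ (fun s => energy (z s)) (fun t => \sum_(i < M.+1) \sum_(j < N.+1)
    2 * ext M N (z t) i j * ext M N (dz t) i j)) => //; first lra.
- have sub : `[0, T'] `<=` `[0, +oo[ by move=> x /=; rewrite !in_itv /= => /andP[-> _].
  by apply: (continuous_subspaceW sub); apply: continuous_energy => i j /zev[].
- by move=> t /andP[t_gt0 _]; apply: is_derive_energy => i j /zev[_]; apply.
move=> t tT; have KE := mulr_ge0 (mulr_ge0 (ler0n R 144) (sqr_ge0 (h^-2))) (energy_ge0 (z t)).
have pointwise i j : 2 * ext M N (z t) i j * ext M N (dz t) i j
    <= ext M N (z t) i j ^+ 2 + (2 * G + 2 * (144 * h^-2 ^+ 2 * energy (z t))).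
  rewrite /ext; case: ifP => inn; last by rewrite mulr0 expr0n /=; lra.
  move: (inn) => /andP[_ jN]; have := f_le t i j tT inn.
  have := Aop_sqr_le _ _ (z t) i _ (mu_le j t jN (ltW (andP tT).1)).
  rewrite /dz; set x := z t i j; set y := f t i j; set A := Aop _ _ _ _ _ _ _ _.
  have := sqr_ge0 (x - (y - A)); have := sqr_ge0 (y + A); lra.
set C := 2 * G + 2 * (144 * h^-2 ^+ 2 * energy (z t)).
apply: le_trans (_ : _ <= \sum_(i < M.+1) \sum_(j < N.+1) (ext M N (z t) i j ^+ 2 + C)) _.
  by apply: ler_sum => i _; apply: ler_sum => j _; exact: pointwise.
have -> : \sum_(i < M.+1) \sum_(j < N.+1) (ext M N (z t) i j ^+ 2 + C)
    = energy (z t) + grid_card * C.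
  under eq_bigr => i _ do rewrite big_split /= sumr_const card_ord.
  by rewrite big_split /= sumr_const card_ord /grid_card mulr_natl -mulrnA mulnC.
rewrite /C /growth_rate; lra.
Qed.

Lemma Aop_comb mu t a b (v w : grid) i j :
  Aop h M N mu t (fun p q => a * v p q + b * w p q) i j
  = a * Aop h M N mu t v i j + b * Aop h M N mu t w i j.
Proof.
have ext_comb p q : ext M N (fun p q => a * v p q + b * w p q) p q
    = a * ext M N v p q + b * ext M N w p q.
  by rewrite /ext; case: ifP => _; ring.
by rewrite /Aop /= !ext_comb; case: ifP => _; ring.
Qed.

Lemma evolves_comb {mu} a b {f1 f2 z1 z2} : evolves mu f1 z1 -> evolves mu f2 z2 ->
  evolves mu (fun t p q => a * f1 t p q + b * f2 t p q) (fun t p q => a * z1 t p q + b * z2 t p q).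
Proof.
move=> ev1 ev2 i j inn; have [c1 d1] := ev1 i j inn; have [c2 d2] := ev2 i j inn.
split=> [x|t t_gt0].
  by apply: cvgD; apply: cvgM; [exact: cvg_cst | exact: c1 | exact: cvg_cst | exact: c2].
have -> : (fun s => a * z1 s i j + b * z2 s i j)
    = a *: (fun s => z1 s i j) + b *: (fun s => z2 s i j) by [].
apply: is_derive_eq; first exact: is_deriveD (is_deriveZ a (d1 t t_gt0)) (is_deriveZ b (d2 t t_gt0)).
by rewrite /GRing.scale /= Aop_comb; ring.
Qed.

Lemma evolves_ext {mu f f' z z'} :
  (forall t i j, f t i j = f' t i j) -> (forall t i j, z t i j = z' t i j) ->
  evolves mu f z -> evolves mu f' z'.
Proof.
move=> ff' zz'; have -> : f' = f by do 3!(apply/funext => ?); rewrite ff'.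
by have -> : z' = z by do 3!(apply/funext => ?); rewrite zz'.
Qed.

Definition Aop_pert (mu : nat -> R -> R) t (v : grid) i j :=
  Aop h M N mu t v i j - Aop h M N (fun _ _ => 0) t v i j.

Lemma evolves_unperturbed {mu f z} : evolves mu f z ->
  evolves (fun _ _ => 0) (fun t i j => f t i j - Aop_pert mu t (z t) i j) z.
Proof.
move=> ev i j inn; have [c d] := ev i j inn; split=> // t t_gt0.
by apply: is_derive_eq (d t t_gt0) _; rewrite /Aop_pert; ring.
Qed.

Definition stability_const (T : R) : R := Num.sqrt (2 * grid_card * expR (growth_rate * T)).

Lemma evolves_zero_init_le {f z} T' T gb : evolves (fun _ _ => 0) f z ->
  (forall i j, inner_node M N i j -> z 0 i j = 0) -> 0 <= T' <= T -> 0 <= gb ->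
  (forall t i j, 0 < t < T' -> inner_node M N i j -> `|f t i j| <= gb) ->
  forall a b, inner_node M N a b -> `|z T' a b| <= stability_const T * gb.
Proof.
move=> ev z0 /andP[T'_ge0 T'T] gb_ge0 f_le a b inn.
have f_sqr t i j : 0 < t < T' -> inner_node M N i j -> f t i j ^+ 2 <= gb ^+ 2.
  by move=> tT ij; rewrite -real_normK ?num_real // ler_sqr ?nnegrE //; exact: f_le.
have zero_le (j : nat) (t : R) : (0 < j < N)%N -> 0 <= t -> `|0 : R| <= 2^-1.
  by move=> *; rewrite normr0 invr_ge0.
have := energy_estimate _ _ zero_le ev T'_ge0 (sqr_ge0 gb) f_sqr.
rewrite (eq_energy (z 0) (fun _ _ => 0) z0) energy0 add0r => E_le.
have k_ge0 : 0 <= growth_rate by apply: le_trans growth_rate_ge1.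
have stab_ge0 : 0 <= stability_const T by exact: sqrtr_ge0.
rewrite -(ler_sqr (normr_ge0 _)) ?nnegrE ?mulr_ge0 // real_normK ?num_real //.
have := sqr_ext_le_energy (z T') a b; rewrite /ext inn => zE.
apply: le_trans zE _; apply: le_trans E_le _.
rewrite exprMn sqr_sqrtr ?mulr_ge0 ?grid_card_ge0 ?expR_ge0 //.
have : 0 <= expR (growth_rate * T) - expR (growth_rate * T').
  by rewrite subr_ge0 ler_expR ler_wpM2l.
move/(mulr_ge0 (mulr_ge0 grid_card_ge0 (sqr_ge0 gb))); lra.
Qed.

End Evolution.

(** * Perturbations *)

Section Perturbations.
Context {R : realType}.
Variable N : nat.
Hypothesis N_ge2 : (2 <= N)%N.
Local Notation fn := (nat -> R -> R).

Lemma exists_ubound_ltn n (P : nat -> R -> Prop) :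
  (forall k B B', B <= B' -> P k B -> P k B') ->
  (forall k, (k < n)%N -> exists B, P k B) -> exists B, forall k, (k < n)%N -> P k B.
Proof.
move=> P_mono; elim: n => [|n IH] PB; first by exists 0 => k; rewrite ltn0.
have [B1 HB1] := IH (fun k kn => PB k (leqW kn)).
have [B2 HB2] := PB n (ltnSn n).
exists (Num.max B1 B2) => k; rewrite ltnS leq_eqVlt => /orP[/eqP->|kn].
  by apply: P_mono HB2; rewrite le_max lexx orbT.
by apply: P_mono (HB1 k kn); rewrite le_max lexx.
Qed.

Lemma admissible_bounded (x : fn) : admissible N x ->
  exists B, forall j t, (0 < j < N)%N -> 0 <= t -> `|x j t| <= B.
Proof.
move=> adx.
pose P k B := (0 < k < N)%N -> forall t, 0 <= t -> `|x k t| <= B.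
have [|k kN|B HB] := @exists_ubound_ltn N P.
- by move=> k B B' BB' H kN t t0; apply: le_trans (H kN t t0) BB'.
- case: (posnP k) => [-> | k_gt0]; first by exists 0.
  have kN' : (0 < k < N)%N by rewrite k_gt0.
  have [_ [B HB]] := adx k kN'.
  by exists B => _; exact: HB.
- by exists B => j t jN; exact: HB j (andP jN).2 jN t.
Qed.

Lemma lamnorm_le (x : fn) B :
  (forall j t, (0 < j < N)%N -> 0 <= t -> `|x j t| <= B) -> lamnorm N x <= B.
Proof.
move=> xB; apply: ge_sup; last by move=> _ [j [t [jN [t_ge0 ->]]]]; exact: xB.
by exists `|x 1%N 0|, 1%N, 0; rewrite N_ge2.
Qed.

Lemma lamnorm_ub (x : fn) j t : admissible N x -> (0 < j < N)%N -> 0 <= t ->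
  `|x j t| <= lamnorm N x.
Proof.
move=> adx jN t_ge0; have [B xB] := admissible_bounded _ adx.
apply: ub_le_sup; last by exists j, t.
by exists B => _ [k [s [kN [s_ge0 ->]]]]; exact: xB.
Qed.

Lemma lamnorm_ge0 (x : fn) : admissible N x -> 0 <= lamnorm N x.
Proof. by move=> adx; apply: le_trans (lamnorm_ub _ 1 0 adx _ _); rewrite ?N_ge2. Qed.

Lemma admissible_comb a b (x y : fn) : admissible N x -> admissible N y ->
  admissible N (fun k t => a * x k t + b * y k t).
Proof.
move=> adx ady k kN; have [cx _] := adx k kN; have [cy _] := ady k kN.
split=> [s|]; first by apply: cvgD; apply: cvgM; [exact: cvg_cst | exact: cx | exact: cvg_cst | exact: cy].
have [Bx xB] := admissible_bounded _ adx; have [By yB] := admissible_bounded _ ady.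
exists (`|a| * Bx + `|b| * By) => t t_ge0.
apply: le_trans (ler_normD _ _) _; rewrite !normrM.
by apply: lerD; apply: ler_wpM2l => //; [exact: xB | exact: yB].
Qed.

Lemma lamnorm_scale_le c (x : fn) : admissible N x ->
  lamnorm N (fun k t => c * x k t) <= `|c| * lamnorm N x.
Proof.
move=> adx; apply: lamnorm_le => j t jN t_ge0.
by rewrite normrM ler_wpM2l // lamnorm_ub.
Qed.

Lemma inWh_zero : inWh N (fun _ _ => 0 : R).
Proof.
have zero_le : lamnorm N (fun _ _ => 0 : R) <= 0 by apply: lamnorm_le => *; rewrite normr0.
split; last by apply: le_lt_trans zero_le _; rewrite invr_gt0.
by move=> k _; split; [move=> x; exact: cvg_cst | exists 0 => t _; rewrite normr0].
Qed.

Lemma inWh_le_half (x : fn) j t : inWh N x -> (0 < j < N)%N -> 0 <= t -> `|x j t| <= 2^-1.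
Proof. by move=> [adx small] jN t_ge0; apply: le_trans (ltW small); exact: lamnorm_ub. Qed.

End Perturbations.

(** * Linearization of the solution map *)

Section FirstOrder.
Context {R : realFieldType}.

(* Up to the factor [h^-2], [A(lam) - A(0)] at node (1, j) multiplies [u(1, j)] by
   [pert_coef1 (lam j)] and [u(2, j)] by [pert_coef2 (lam j)]; see [Aop_pert_eq]. *)
Definition pert_coef1 (m : R) : R := 2 / (1 + m) - 2.
Definition pert_coef2 (m : R) : R := 1 - 2 / (2 + m).

Lemma pert_coef1_expansion m : `|m| <= 2^-1 -> `|pert_coef1 m - (-2) * m| <= 4 * m ^+ 2.
Proof.
move=> /ler_normlP[m_lo m_hi]; have m1 : 0 < 1 + m by lra.
have -> : pert_coef1 m - (-2) * m = 2 * m ^+ 2 / (1 + m) by rewrite /pert_coef1; field; rewrite gt_eqF.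
rewrite ger0_norm; last by apply: divr_ge0; [rewrite mulr_ge0 ?sqr_ge0 | exact: ltW].
rewrite ler_pdivrMr //; have := sqr_ge0 m; nra.
Qed.

Lemma pert_coef2_expansion m : `|m| <= 2^-1 -> `|pert_coef2 m - 2^-1 * m| <= 4 * m ^+ 2.
Proof.
move=> /ler_normlP[m_lo m_hi]; have m2 : 0 < 2 + m by lra.
have -> : pert_coef2 m - 2^-1 * m = - (m ^+ 2 / (2 * (2 + m))).
  by rewrite /pert_coef2; field; rewrite gt_eqF.
rewrite normrN ger0_norm; last by apply: divr_ge0; [exact: sqr_ge0 | rewrite mulr_ge0 // ltW].
rewrite ler_pdivrMr ?mulr_gt0 //; have := sqr_ge0 m; nra.
Qed.

Lemma normrN2_le2 : `|-2 : R| <= 2. Proof. by rewrite normrN ger0_norm. Qed.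

Lemma normrV2_le2 : `|2^-1 : R| <= 2. Proof. by rewrite ger0_norm ?invr_ge0 //; lra. Qed.

Lemma norm_le_of_expansion {phi alpha m : R} : `|alpha| <= 2 -> `|m| <= 2^-1 ->
  `|phi - alpha * m| <= 4 * m ^+ 2 -> `|phi| <= 4 * `|m|.
Proof.
move=> al m_le exp_le; have am := normM_le al (lexx `|m|).
have m2 : m ^+ 2 <= 2^-1 * `|m|.
  by rewrite -real_normK ?num_real // expr2 ler_wpM2r.
have := ler_normD (phi - alpha * m) (alpha * m); rewrite subrK; lra.
Qed.

Lemma comb_weights_le (a b rx ry rl : R) : 0 <= rx -> 0 <= ry -> 0 <= rl ->
  rl ^+ 2 + `|a| * rx ^+ 2 + `|b| * ry ^+ 2
    <= (1 + `|a| + `|b|) * (rx ^+ 2 + ry ^+ 2 + rl ^+ 2) /\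
  `|a| * (rx * (rl + rx)) + `|b| * (ry * (rl + ry))
    <= 2 * ((1 + `|a| + `|b|) * (rx ^+ 2 + ry ^+ 2 + rl ^+ 2)).
Proof.
move=> rx_ge0 ry_ge0 rl_ge0; set S := rx ^+ 2 + ry ^+ 2 + rl ^+ 2.
have a_ge0 := normr_ge0 a; have b_ge0 := normr_ge0 b.
have x2 := sqr_ge0 rx; have y2 := sqr_ge0 ry; have l2 := sqr_ge0 rl.
have cross r : r ^+ 2 <= S -> r * (rl + r) <= 2 * S.
  by move=> rS; have := sqr_ge0 (r - rl); rewrite /S in rS *; nra.
have rxS : rx ^+ 2 <= S by rewrite /S; lra.
have ryS : ry ^+ 2 <= S by rewrite /S; lra.
have cx := cross rx rxS; have cy := cross ry ryS.
by split; rewrite /S in cx cy *; nra.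
Qed.

Lemma first_order_comb_le {alpha kappa U L a b x y pl px py el ex ey rx ry rl : R} :
  0 <= kappa -> 0 <= L ->
  `|pl - alpha * (a * x + b * y)| <= kappa * (a * x + b * y) ^+ 2 ->
  `|px - alpha * x| <= kappa * x ^+ 2 -> `|py - alpha * y| <= kappa * y ^+ 2 ->
  `|x| <= rx -> `|y| <= ry -> `|a * x + b * y| <= rl ->
  `|el| <= U -> `|ex| <= U -> `|ey| <= U ->
  `|el - ex| <= L * (rl + rx) -> `|el - ey| <= L * (rl + ry) ->
  `|pl * el - a * (px * ex) - b * (py * ey)|
    <= (kappa * U + 2 * `|alpha| * L) * ((1 + `|a| + `|b|) * (rx ^+ 2 + ry ^+ 2 + rl ^+ 2)).
Proof.
move=> k_ge0 L_ge0 epl epx epy xr yr lr elU exU eyU dex dey.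
set l := a * x + b * y in epl lr *.
(* Since [l = a x + b y], the first-order parts combine into [alpha] times
   differences of the [e]'s; all other terms are quadratic. *)
have U_ge0 : 0 <= U := le_trans (normr_ge0 _) elU.
have [rx_ge0 ry_ge0] : 0 <= rx /\ 0 <= ry.
  by split; [exact: le_trans (normr_ge0 _) xr | exact: le_trans (normr_ge0 _) yr].
have rl_ge0 : 0 <= rl := le_trans (normr_ge0 _) lr.
have -> : pl * el - a * (px * ex) - b * (py * ey)
    = (pl - alpha * l) * el - a * ((px - alpha * x) * ex) - b * ((py - alpha * y) * ey)
      + alpha * (a * (x * (el - ex)) + b * (y * (el - ey))) by rewrite /l; ring.
have kl : `|pl - alpha * l| <= kappa * rl ^+ 2.
  by apply: le_trans epl (ler_wpM2l k_ge0 (sqr_le_of_norm lr)).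
have kx : `|px - alpha * x| <= kappa * rx ^+ 2.
  by apply: le_trans epx (ler_wpM2l k_ge0 (sqr_le_of_norm xr)).
have ky : `|py - alpha * y| <= kappa * ry ^+ 2.
  by apply: le_trans epy (ler_wpM2l k_ge0 (sqr_le_of_norm yr)).
have t1 := normM_le kl elU.
have t2 := normM_le (lexx `|a|) (normM_le kx exU).
have t3 := normM_le (lexx `|b|) (normM_le ky eyU).
have t4 := normM_le (lexx `|a|) (normM_le xr dex).
have t5 := normM_le (lexx `|b|) (normM_le yr dey).
have t45 := normM_le (lexx `|alpha|) (le_trans (ler_normD _ _) (lerD t4 t5)).
have [quad mixed] := comb_weights_le a b _ _ _ rx_ge0 ry_ge0 rl_ge0.
have hq := ler_wpM2l (mulr_ge0 k_ge0 U_ge0) quad.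
have hm := ler_wpM2l (mulr_ge0 (normr_ge0 alpha) L_ge0) mixed.
set A := (pl - alpha * l) * el; set B := a * _; set C := b * _; set D := alpha * _.
have := ler_normD (A - B - C) D; have := ler_normB (A - B) C; have := ler_normB A B.
lra.
Qed.

End FirstOrder.

Lemma Aop_pert_eq (R : realType) (h : R) (M N : nat) mu t v i j :
  Aop_pert h M N mu t v i j = if i == 1%N
    then h^-2 * (pert_coef1 (mu j t) * ext M N v 1 j + pert_coef2 (mu j t) * ext M N v 2 j)
    else 0.
Proof.
rewrite /Aop_pert /Aop /=; case: ifP => _; last by rewrite subrr.
rewrite /pert_coef1 /pert_coef2 !addr0 invr1 divff ?pnatr_eq0 //; ring.
Qed.

Section Linearization.
Context {R : realType}.
Variables (h : R) (M N : nat) (T : R)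
  (F : R -> nat -> nat -> R) (u0 : nat -> nat -> R)
  (u : (nat -> R -> R) -> R -> nat -> nat -> R).
Hypotheses (h_gt0 : 0 < h) (N_ge2 : (2 <= N)%N) (T_gt0 : 0 < T)
  (F_cont : forall i j, inner_node M N i j -> cont_on_Rplus (fun t => F t i j))
  (u_sol : forall lam, inWh N lam -> is_solution h M N F u0 lam (u lam)).
Local Notation lam0 := (fun _ _ => 0 : R).
Local Notation energy := (@energy R M N).
Local Notation grid_card := (@grid_card R M N).
Local Notation growth_rate := (@growth_rate R h M N).
Local Notation stability_const := (@stability_const R h M N T).
Local Notation evolves := (@evolves R h M N).
Local Notation energy_estimate := (energy_estimate h M N h_gt0).
Local Notation evolves_zero_init_le := (evolves_zero_init_le h M N h_gt0).
Local Notation evolves_comb := (evolves_comb h M N).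
Local Notation evolves_unperturbed := (evolves_unperturbed h M N).
Local Notation evolves_ext := (evolves_ext h M N).
Local Notation invh2_gt0 := (invh2_gt0 h h_gt0).

Lemma solution_evolves lam : inWh N lam -> evolves lam F (u lam).
Proof. by move=> W i j inn; have [_ []] := u_sol _ W i j inn. Qed.

Lemma solutions_bounded : exists U, 0 <= U /\ forall lam, inWh N lam ->
  forall t, 0 <= t <= T -> forall a b, `|ext M N (u lam t) a b| <= U.
Proof.
have sub : `[0, T] `<=` `[0, +oo[ by move=> x /=; rewrite !in_itv /= => /andP[-> _].
have cF : {within `[0, T], continuous (fun t => energy (F t))}.
  by apply: (continuous_subspaceW sub); exact: continuous_energy.
have [tm _ F_max] := EVT_max (ltW T_gt0) cF.
set Phi := energy (F tm).
exists (Num.sqrt ((energy u0 + 2 * grid_card * Phi) * expR (growth_rate * T))).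
split=> [|lam W t /andP[t_ge0 tT] a b]; first exact: sqrtr_ge0.
apply: le_trans (norm_ext_le_sqrt_energy _ _ _ _ _) _; apply: ler_wsqrtr.
have F_sqr s i j : 0 < s < t -> inner_node M N i j -> F s i j ^+ 2 <= Phi.
  move=> /andP[s_gt0 st] inn; have := sqr_ext_le_energy M N (F s) i j; rewrite /ext inn.
  by move/le_trans; apply; apply: F_max; rewrite in_itv /= (ltW s_gt0) (le_trans (ltW st) tT).
have lam_le j s : (0 < j < N)%N -> 0 <= s -> `|lam j s| <= 2^-1 by exact: inWh_le_half.
have := energy_estimate _ _ lam_le (solution_evolves _ W) t_ge0 (energy_ge0 _ _ _) F_sqr.
rewrite (eq_energy M N (u lam 0) u0); last by move=> i j inn; have [] := u_sol _ W i j inn.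
move/le_trans; apply; apply: ler_wpM2l.
  by rewrite addr_ge0 ?energy_ge0 // !mulr_ge0 ?grid_card_ge0 ?energy_ge0.
by rewrite ler_expR ler_wpM2l // (le_trans _ (growth_rate_ge1 h M N)).
Qed.

Definition pert_force lam t i j := Aop_pert h M N lam t (u lam t) i j.

Lemma diff_evolves lam : inWh N lam ->
  evolves lam0 (fun t i j => - pert_force lam t i j) (fun t i j => u lam t i j - u lam0 t i j).
Proof.
move=> W; have ev := evolves_comb 1 (-1) (evolves_unperturbed (solution_evolves _ W))
  (evolves_unperturbed (solution_evolves _ (inWh_zero _ N_ge2))).
apply: evolves_ext ev => t i j; last by ring.
by rewrite /pert_force [Aop_pert _ _ _ lam0 _ _ _ _]/Aop_pert subrr; ring.
Qed.

Lemma diff_init lam : inWh N lam ->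
  forall i j, inner_node M N i j -> u lam 0 i j - u lam0 0 i j = 0.
Proof.
move=> W i j inn; have [-> _] := u_sol _ W i j inn.
by have [-> _] := u_sol _ (inWh_zero _ N_ge2) i j inn; rewrite subrr.
Qed.

Definition increment i j (lam : nat -> R -> R) := u lam T i j - u lam0 T i j.

Section UniformBound.
Variable U : R.
Hypotheses (U_ge0 : 0 <= U) (u_le_U : forall lam, inWh N lam ->
  forall t, 0 <= t <= T -> forall a b, `|ext M N (u lam t) a b| <= U).

Definition lip_const := stability_const * (8 * h^-2 * U).

Lemma lip_const_ge0 : 0 <= lip_const.
Proof. by rewrite mulr_ge0 ?sqrtr_ge0 // !mulr_ge0 // ltW // invh2_gt0. Qed.

Lemma diff_lipschitz lam t : inWh N lam -> 0 <= t <= T ->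
  forall a b, `|ext M N (u lam t) a b - ext M N (u lam0 t) a b| <= lip_const * lamnorm N lam.
Proof.
move=> W tT a b; have [adl _] := W.
have p_ge0 : 0 <= lamnorm N lam by exact: lamnorm_ge0.
rewrite /ext; case: ifP => inn; last by rewrite subrr normr0 mulr_ge0 ?lip_const_ge0.
rewrite /lip_const -mulrA.
apply: (evolves_zero_init_le _ _ _ (diff_evolves _ W) (diff_init _ W) tT) => //.
  by rewrite !mulr_ge0 // ltW // invh2_gt0.
move=> s i j /andP[s_gt0 st] /andP[_ jN].
have sT : 0 <= s <= T by rewrite (ltW s_gt0) (le_trans (ltW st) (andP tT).2).
rewrite normrN /pert_force Aop_pert_eq; case: ifP => _; last first.
  by rewrite normr0 !mulr_ge0 // ltW // invh2_gt0.
have m_half := inWh_le_half _ _ _ _ W jN (ltW s_gt0).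
have m_le : `|lam j s| <= lamnorm N lam by apply: lamnorm_ub => //; exact: ltW.
have c1 := norm_le_of_expansion normrN2_le2 m_half (pert_coef1_expansion _ m_half).
have c2 := norm_le_of_expansion normrV2_le2 m_half (pert_coef2_expansion _ m_half).
have e1 := u_le_U _ W _ sT 1%N j; have e2 := u_le_U _ W _ sT 2%N j.
have X_le : `|pert_coef1 (lam j s) * ext M N (u lam s) 1 j + pert_coef2 (lam j s) * ext M N (u lam s) 2 j|
    <= 8 * U * lamnorm N lam.
  have := ler_normD (pert_coef1 (lam j s) * ext M N (u lam s) 1 j)
    (pert_coef2 (lam j s) * ext M N (u lam s) 2 j).
  have := normM_le c1 e1; have := normM_le c2 e2; have := ler_wpM2r U_ge0 m_le; lra.
rewrite normrM gtr0_norm ?invh2_gt0 //.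
by have := ler_wpM2l (ltW invh2_gt0) X_le; lra.
Qed.

Lemma increment_lipschitz i j : inner_node M N i j -> forall x, admissible N x ->
  lamnorm N x < 2^-1 -> `|increment i j x| <= lip_const * lamnorm N x.
Proof.
move=> inn x adx small; have TT : 0 <= T <= T by rewrite lexx ltW.
by have := diff_lipschitz x T (conj adx small) TT i j; rewrite /ext inn.
Qed.

Lemma diff_pair_le lam lam' t a b : inWh N lam -> inWh N lam' -> 0 <= t <= T ->
  `|ext M N (u lam t) a b - ext M N (u lam' t) a b|
    <= lip_const * (lamnorm N lam + lamnorm N lam').
Proof.
move=> W W' tT; have := diff_lipschitz _ _ W tT a b; have := diff_lipschitz _ _ W' tT a b.
have := ler_normB (ext M N (u lam t) a b - ext M N (u lam0 t) a b)
  (ext M N (u lam' t) a b - ext M N (u lam0 t) a b).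
rewrite opprB addrA subrK; lra.
Qed.

Definition quasi_const := stability_const * (8 * h^-2 * (U + lip_const)).

Lemma quasi_const_ge0 : 0 <= quasi_const.
Proof.
by rewrite mulr_ge0 ?sqrtr_ge0 // !mulr_ge0 ?addr_ge0 ?lip_const_ge0 // ltW // invh2_gt0.
Qed.

Lemma pert_force_comb_le a b x y s i j :
  inWh N x -> inWh N y -> inWh N (a *: x + b *: y) -> 0 < s <= T -> (0 < j < N)%N ->
  `|pert_force (a *: x + b *: y) s i j - a * pert_force x s i j - b * pert_force y s i j|
    <= 8 * h^-2 * (U + lip_const) * ((1 + `|a| + `|b|)
       * (lamnorm N x ^+ 2 + lamnorm N y ^+ 2 + lamnorm N (a *: x + b *: y) ^+ 2)).
Proof.
move=> Wx Wy Wz /andP[s_gt0 sT] jN; set z := a *: x + b *: y.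
set Q := (1 + `|a| + `|b|) * _.
have hh := invh2_gt0; have L_ge0 := lip_const_ge0.
have Q_ge0 : 0 <= Q by rewrite mulr_ge0 ?addr_ge0 ?sqr_ge0.
rewrite /pert_force !Aop_pert_eq; case: ifP => _; last first.
  by rewrite !mulr0 !subr0 normr0 mulr_ge0 // mulr_ge0 ?addr_ge0 // mulr_ge0 // ltW.
have sT' : 0 <= s <= T by rewrite (ltW s_gt0).
have [adx _] := Wx; have [ady _] := Wy; have [adz _] := Wz.
have nx : `|x j s| <= lamnorm N x by apply: lamnorm_ub => //; exact: ltW.
have ny : `|y j s| <= lamnorm N y by apply: lamnorm_ub => //; exact: ltW.
have nz : `|a * x j s + b * y j s| <= lamnorm N z by apply: (lamnorm_ub N z) => //; exact: ltW.
have hx := inWh_le_half _ _ _ _ Wx jN (ltW s_gt0).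
have hy := inWh_le_half _ _ _ _ Wy jN (ltW s_gt0).
have hz : `|a * x j s + b * y j s| <= 2^-1 by exact: (inWh_le_half _ z _ _ Wz jN (ltW s_gt0)).
have row (p : nat) (phi : R -> R) alpha :
    `|alpha| <= 2 -> (forall m, `|m| <= 2^-1 -> `|phi m - alpha * m| <= 4 * m ^+ 2) ->
    `|phi (a * x j s + b * y j s) * ext M N (u z s) p j
      - a * (phi (x j s) * ext M N (u x s) p j) - b * (phi (y j s) * ext M N (u y s) p j)|
    <= (4 * U + 4 * lip_const) * Q.
  move=> alpha_le phi_exp.
  apply: le_trans (first_order_comb_le (ler0n _ 4) L_ge0 (phi_exp _ hz) (phi_exp _ hx)
    (phi_exp _ hy) nx ny nz (u_le_U _ Wz _ sT' p j) (u_le_U _ Wx _ sT' p j)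
    (u_le_U _ Wy _ sT' p j) (diff_pair_le _ _ _ _ _ Wz Wx sT')
    (diff_pair_le _ _ _ _ _ Wz Wy sT')) _.
  apply: ler_wpM2r => //; rewrite lerD2l; have := ler_wpM2r L_ge0 alpha_le; lra.
have r1 := row 1%N pert_coef1 (-2) normrN2_le2 pert_coef1_expansion.
have r2 := row 2%N pert_coef2 2^-1 normrV2_le2 pert_coef2_expansion.
rewrite -[a * x j s + b * y j s]/(z j s) in r1 r2.
set E1 := pert_coef1 (z j s) * _ - _ - _ in r1; set E2 := pert_coef2 (z j s) * _ - _ - _ in r2.
rewrite (_ : _ - _ - _ = h^-2 * (E1 + E2)); last by rewrite /E1 /E2; ring.
rewrite normrM gtr0_norm //.
have := ler_wpM2l (ltW hh) (le_trans (ler_normD E1 E2) (lerD r1 r2)); lra.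
Qed.

Lemma increment_quasilinear i j : inner_node M N i j ->
  forall a b x y, admissible N x -> admissible N y ->
  lamnorm N x < 2^-1 -> lamnorm N y < 2^-1 -> lamnorm N (a *: x + b *: y) < 2^-1 ->
  `|increment i j (a *: x + b *: y) - a * increment i j x - b * increment i j y|
    <= quasi_const * (1 + `|a| + `|b|)
       * (lamnorm N x ^+ 2 + lamnorm N y ^+ 2 + lamnorm N (a *: x + b *: y) ^+ 2).
Proof.
move=> inn a b x y adx ady sx sy sz; set z := a *: x + b *: y.
have [Wx Wy] : inWh N x /\ inWh N y by [].
have Wz : inWh N z by split; first exact: admissible_comb.
have ev := evolves_comb 1 (-b)
  (evolves_comb 1 (-a) (diff_evolves _ Wz) (diff_evolves _ Wx)) (diff_evolves _ Wy).
rewrite /quasi_const -!mulrA /increment.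
rewrite (_ : _ - _ - _ = 1 * (1 * (u z T i j - u lam0 T i j) + - a * (u x T i j - u lam0 T i j))
  + - b * (u y T i j - u lam0 T i j)); last by ring.
apply: (evolves_zero_init_le _ _ _ ev) => //.
- by move=> p q inn'; rewrite !diff_init //; ring.
- by rewrite lexx ltW.
- by rewrite !mulr_ge0 ?addr_ge0 ?sqr_ge0 ?lip_const_ge0 // ltW // invh2_gt0.
move=> s p q /andP[s_gt0 sT] /andP[_ qN].
have sT' : 0 < s <= T by rewrite s_gt0 ltW.
have := pert_force_comb_le a b x y s p q Wx Wy Wz sT' qN.
have -> : 1 * (1 * - pert_force z s p q + - a * - pert_force x s p q) + - b * - pert_force y s p q
    = - (pert_force z s p q - a * pert_force x s p q - b * pert_force y s p q) by ring.
by rewrite normrN -!mulrA.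
Qed.

End UniformBound.

End Linearization.

Arguments solutions_bounded {R h M N T F u0 u}.
Arguments lip_const_ge0 {R h M N T} _ {U}.
Arguments quasi_const_ge0 {R h M N T} _ {U}.
Arguments increment_lipschitz {R h M N T F u0 u} _ _ _ _ {U} _ _ {i j}.
Arguments increment_quasilinear {R h M N T F u0 u} _ _ _ _ {U} _ _ {i j}.

Theorem theorem2p14 (R : realType) (h : R) (M N : nat) (T : R)
  (F : R -> nat -> nat -> R) (u0 : nat -> nat -> R)
  (u : (nat -> R -> R) -> R -> nat -> nat -> R) :
  0 < h -> (2 <= M)%N -> (2 <= N)%N -> 0 < T ->
  (forall i j, inner_node M N i j ->
     cont_on_Rplus (fun t => F t i j)) ->
  (forall lam, inWh N lam -> is_solution h M N F u0 lam (u lam)) ->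
  frechet_diff_at0 M N (fun lam => u lam T).
Proof.
move=> h_gt0 _ N_ge2 T_gt0 F_cont u_sol.
have [U [U_ge0 u_le_U]] := solutions_bounded h_gt0 T_gt0 F_cont u_sol.
set Lg := lip_const h M N T U; set K := quasi_const h M N T U.
have diff i j (inn : inner_node M N i j) :=
  dyadic_differentiable (admissible N) (lamnorm N) (increment T u i j) K Lg
    (admissible_comb N) (lamnorm_ge0 N N_ge2) (lamnorm_scale_le N N_ge2)
    (quasi_const_ge0 h_gt0 U_ge0) (lip_const_ge0 h_gt0 U_ge0)
    (increment_lipschitz h_gt0 N_ge2 T_gt0 u_sol U_ge0 u_le_U inn)
    (increment_quasilinear h_gt0 N_ge2 T_gt0 u_sol U_ge0 u_le_U inn).
exists (fun x i j => dyadic_derivative (increment T u i j) x); split; [|split].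
- by move=> a b x y adx ady i j /diff[lin _ _]; exact: lin.
- by exists Lg => x adx i j /diff[_ bound _]; exact: bound.
move=> eps eps_gt0; exists (eps / (10 * K + 1)).
have K_ge0 : 0 <= K := quasi_const_ge0 h_gt0 U_ge0.
split=> [|x [adx small] x_lt i j /diff[_ _ remainder]]; first by rewrite divr_gt0 //; lra.
apply: le_trans (remainder x adx small) _.
have p_ge0 := lamnorm_ge0 N N_ge2 x adx.
rewrite ltr_pdivlMr in x_lt; last lra.
have Kp_le : 10 * K * lamnorm N x <= eps by nra.
by rewrite expr2 mulrA ler_wpM2r.
Qed.
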